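(* Let $\boldsymbol{A}$ be the adjacency matrix of an undirected graph without self-loops on a finite vertex set $\boldsymbol{V}=\{1,\dots,N\}$. Let $\mathcal{R}_e\subset\boldsymbol{V}$ be a nonempty set of egos and $\mathcal{R}_a\subset\boldsymbol{V}\setminus\mathcal{R}_e$ a nonempty set of alters, $n_a=|\mathcal{R}_a|$, each alter $j$ having a unique recruiting ego $e(j)\in\mathcal{R}_e$ with $A_{j\,e(j)}=1$. Let $\widetilde{\boldsymbol{A}}$ have $\widetilde A_{ij}=\widetilde A_{ji}=1$ iff $i\in\mathcal{R}_a$ and $j=e(i)$ (other entries $0$), and $\widetilde F_i=\mathbb{I}\{\sum_{j\neq i}Z_j\widetilde A_{ij}>0\}$. Let $\boldsymbol{Z}\in\{0,1\}^N$ have independent components with $\Pr(Z_i=1)=p_z\,\mathbb{I}\{i\in\mathcal{R}_e\}$, $p_z\in(0,1)$. For an alter $i$, let $S_i=\sum_{j\neq i}Z_jA_{ij}$ and define the three-level exposure $F_i=0$ if $S_i=0$, $F_i=1$ if $S_i=1$, $F_i=2+$ if $S_i\ge2$. Each alter $i$ has fixed real potential outcomes $Y_i(0,0),Y_i(0,1),Y_i(0,2+)$ and observed outcome $Y_i=Y_i(0,F_i)$. Assume there is a constant $\delta$ with $Y_i(0,2+)-Y_i(0,1)=\delta[Y_i(0,1)-Y_i(0,0)]$ for all $i\in\mathcal{R}_a$. Let $S_{i,-e(i)}=\sum_{j\in\mathcal{R}_e\setminus\{e(i)\}}Z_jA_{ij}$, $\pi^*_{i,0}=\Pr(S_{i,-e(i)}=0)$,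 $\pi^*_{i,1}=\Pr(S_{i,-e(i)}=1)$ (over $\boldsymbol{Z}$), and assume $\pi^*_{i,0}+\pi^*_{i,1}\delta\neq0$ for all $i\in\mathcal{R}_a$. Define $$IE=\frac1{n_a}\sum_{i\in\mathcal{R}_a}[Y_i(0,1)-Y_i(0,0)],\qquad \widehat{IE}=\frac1{n_a}\sum_{i\in\mathcal{R}_a}\Big[\frac{\mathbb{I}\{\widetilde F_i=1\}Y_i}{p_z}-\frac{\mathbb{I}\{\widetilde F_i=0\}Y_i}{1-p_z}\Big],$$ $$\widehat{IE}_{adj}=\frac1{n_a}\sum_{i\in\mathcal{R}_a}\frac{1}{\pi^*_{i,0}+\pi^*_{i,1}\delta}\Big[\frac{\mathbb{I}\{\widetilde F_i=1\}Y_i}{p_z}-\frac{\mathbb{I}\{\widetilde F_i=0\}Y_i}{1-p_z}\Big].$$ Then $\mathbb{E}_{\boldsymbol{Z}}[\widehat{IE}]=\frac1{n_a}\sum_{i\in\mathcal{R}_a}(\pi^*_{i,0}+\pi^*_{i,1}\delta)[Y_i(0,1)-Y_i(0,0)]$ and $\mathbb{E}_{\boldsymbol{Z}}[\widehat{IE}_{adj}]=IE$.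
   Context: Design-based setting: the network, the sample, the recruitment map and the potential outcomes are fixed; only $\boldsymbol{Z}$ is random and expectations/probabilities are over $\boldsymbol{Z}$. Alters are never treated, so their outcomes depend only on the three-level exposure. *)

(* Design-based setting: Z : {ffun 'I_N -> bool} is the only
   random object; expectations are finite sums over all 2^N assignments
   weighted by the product (independent Bernoulli) law. *)
From mathcomp Require Import all_boot all_order all_algebra.
Set Implicit Arguments. Unset Strict Implicit. Unset Printing Implicit Defensive.
Import Order.TTheory GRing.Theory Num.Theory.
Local Open Scope ring_scope.

Definition probZ {R : realFieldType} {N : nat} (Re : {set 'I_N}) (pz : R)
  (Z : {ffun 'I_N -> bool}) : R :=
  \prod_(i < N)
    (let q := if i \in Re then pz else 0 in if Z i then q else 1 - q).

Definition EZ {R : realFieldType} {N : nat} (Re : {set 'I_N}) (pz : R)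
  (f : {ffun 'I_N -> bool} -> R) : R :=
  \sum_(Z : {ffun 'I_N -> bool}) probZ Re pz Z * f Z.

Definition PrZ {R : realFieldType} {N : nat} (Re : {set 'I_N}) (pz : R)
  (P : {ffun 'I_N -> bool} -> bool) : R :=
  EZ Re pz (fun Z => if P Z then 1 else 0).

Definition Atilde {N : nat} (Ra : {set 'I_N}) (e : 'I_N -> 'I_N) (i j : 'I_N)
  : bool := ((i \in Ra) && (j == e i)) || ((j \in Ra) && (i == e j)).

Definition Ftilde {N : nat} (Ra : {set 'I_N}) (e : 'I_N -> 'I_N)
  (Z : {ffun 'I_N -> bool}) (i : 'I_N) : bool :=
  (0 < \sum_(j < N | j != i) (Z j && Atilde Ra e i j))%N.

Definition Sexp {N : nat} (A : rel 'I_N) (Z : {ffun 'I_N -> bool}) (i : 'I_N)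
  : nat := \sum_(j < N | j != i) (Z j && A i j).

Definition Yobs {R : realFieldType} {N : nat} (A : rel 'I_N)
  (Y00 Y01 Y02 : 'I_N -> R) (Z : {ffun 'I_N -> bool}) (i : 'I_N) : R :=
  let s := Sexp A Z i in
  if s == 0%N then Y00 i else if s == 1%N then Y01 i else Y02 i.

Definition Sminus {N : nat} (A : rel 'I_N) (Re : {set 'I_N})
  (e : 'I_N -> 'I_N) (Z : {ffun 'I_N -> bool}) (i : 'I_N) : nat :=
  \sum_(j in Re :\ e i) (Z j && A i j).

Definition pistar0 {R : realFieldType} {N : nat} (A : rel 'I_N)
  (Re : {set 'I_N}) (e : 'I_N -> 'I_N) (pz : R) (i : 'I_N) : R :=
  PrZ Re pz (fun Z => Sminus A Re e Z i == 0%N).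

Definition pistar1 {R : realFieldType} {N : nat} (A : rel 'I_N)
  (Re : {set 'I_N}) (e : 'I_N -> 'I_N) (pz : R) (i : 'I_N) : R :=
  PrZ Re pz (fun Z => Sminus A Re e Z i == 1%N).

Definition IE {R : realFieldType} {N : nat} (Ra : {set 'I_N})
  (Y00 Y01 : 'I_N -> R) : R :=
  (#|Ra|%:R)^-1 * \sum_(i in Ra) (Y01 i - Y00 i).

Definition HTterm {R : realFieldType} {N : nat} (A : rel 'I_N)
  (Ra : {set 'I_N}) (e : 'I_N -> 'I_N) (pz : R) (Y00 Y01 Y02 : 'I_N -> R)
  (Z : {ffun 'I_N -> bool}) (i : 'I_N) : R :=
  (if Ftilde Ra e Z i then 1 else 0) * Yobs A Y00 Y01 Y02 Z i / pz
  - (if ~~ Ftilde Ra e Z i then 1 else 0) * Yobs A Y00 Y01 Y02 Z i / (1 - pz).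

Definition IEhat {R : realFieldType} {N : nat} (A : rel 'I_N)
  (Ra : {set 'I_N}) (e : 'I_N -> 'I_N) (pz : R) (Y00 Y01 Y02 : 'I_N -> R)
  (Z : {ffun 'I_N -> bool}) : R :=
  (#|Ra|%:R)^-1 * \sum_(i in Ra) HTterm A Ra e pz Y00 Y01 Y02 Z i.

Definition IEhat_adj {R : realFieldType} {N : nat} (A : rel 'I_N)
  (Re Ra : {set 'I_N}) (e : 'I_N -> 'I_N) (pz delta : R)
  (Y00 Y01 Y02 : 'I_N -> R) (Z : {ffun 'I_N -> bool}) : R :=
  (#|Ra|%:R)^-1 * \sum_(i in Ra)
     (pistar0 A Re e pz i + pistar1 A Re e pz i * delta)^-1
     * HTterm A Ra e pz Y00 Y01 Y02 Z i.

(* For an alter i with recruiter k = e(i), the tilde exposure is just Z_k, and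
   the true count splits as S_i = Z_k + S_{i,-k} with S_{i,-k} independent of
   Z_k.  Conditioning on Z_k, the two Horvitz-Thompson terms therefore have
   means E[Y_i(0, 1 + S_{i,-k})] and E[Y_i(0, S_{i,-k})]; their difference is
   Y_i(0,1) - Y_i(0,0) on {S_{i,-k} = 0}, delta times it on {S_{i,-k} = 1} and
   0 otherwise, whence the bias factor pi*_{i,0} + pi*_{i,1} delta. *)
From mathcomp Require Import all_boot all_order all_algebra.
From mathcomp Require Import ring.
Import Order.TTheory GRing.Theory Num.Theory.
Local Open Scope ring_scope.

Set Implicit Arguments. Unset Strict Implicit.

Section ExpectationZ.
Variables (R : realFieldType) (N : nat) (Re : {set 'I_N}) (pz : R).
Local Notation assignment := {ffun 'I_N -> bool}.

Lemma EZ_eq_on_support (f g : assignment -> R) :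
  (forall Z, probZ Re pz Z != 0 -> f Z = g Z) -> EZ Re pz f = EZ Re pz g.
Proof.
move=> fg; apply: eq_bigr => Z _.
have [->|nz] := eqVneq (probZ Re pz Z) 0; first by rewrite !mul0r.
by rewrite fg.
Qed.

Lemma EZD (f g : assignment -> R) :
  EZ Re pz (fun Z => f Z + g Z) = EZ Re pz f + EZ Re pz g.
Proof. by rewrite /EZ -big_split; apply: eq_bigr => Z _; rewrite mulrDr. Qed.

Lemma EZB (f g : assignment -> R) :
  EZ Re pz (fun Z => f Z - g Z) = EZ Re pz f - EZ Re pz g.
Proof. by rewrite /EZ -sumrB; apply: eq_bigr => Z _; rewrite mulrBr. Qed.

Lemma EZZ (c : R) (f : assignment -> R) :
  EZ Re pz (fun Z => c * f Z) = c * EZ Re pz f.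
Proof. by rewrite /EZ mulr_sumr; apply: eq_bigr => Z _; rewrite mulrCA. Qed.

Lemma EZ_sum (I : finType) (S : {set I}) (F : I -> assignment -> R) :
  EZ Re pz (fun Z => \sum_(i in S) F i Z) = \sum_(i in S) EZ Re pz (F i).
Proof. by rewrite /EZ exchange_big; apply: eq_bigr => Z _; rewrite mulr_sumr. Qed.

Lemma probZ_supp (Z : assignment) j :
  probZ Re pz Z != 0 -> j \notin Re -> Z j = false.
Proof.
move=> nz jNRe; apply/negP => Zj; move: nz.
by rewrite /probZ (bigD1 j) //= (negbTE jNRe) Zj mul0r eqxx.
Qed.

Definition toggle (k : 'I_N) (Z : assignment) : assignment :=
  [ffun j => if j == k then ~~ Z k else Z j].

Lemma toggleK k : involutive (toggle k).
Proof.
move=> Z; apply/ffunP => j; rewrite !ffunE eqxx.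
by case: (j =P k) => [->|//]; rewrite negbK.
Qed.

Lemma probZ_toggle k (Z : assignment) : k \in Re -> Z k ->
  (1 - pz) * probZ Re pz Z = pz * probZ Re pz (toggle k Z).
Proof.
move=> kRe Zk; rewrite /probZ (bigD1 k) // [in RHS](bigD1 k) //= !ffunE eqxx kRe Zk /=.
rewrite mulrCA.
congr (_ * (_ * _)); apply: eq_bigr => j jk.
by rewrite ffunE (negbTE jk).
Qed.

Section IndependentCoordinate.
Variables (k : 'I_N) (h : assignment -> R).
Hypotheses (kRe : k \in Re) (h_toggle : forall Z, h (toggle k Z) = h Z).

Lemma EZ_toggle_balance :
  (1 - pz) * EZ Re pz (fun Z => (if Z k then 1 else 0) * h Z)
  = pz * EZ Re pz (fun Z => (if ~~ Z k then 1 else 0) * h Z).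
Proof.
rewrite /EZ !mulr_sumr [in RHS](reindex_inj (can_inj (toggleK k))) /=.
apply: eq_bigr => Z _; rewrite h_toggle ffunE eqxx negbK.
case Zk: (Z k); last by rewrite !mul0r !mulr0.
by rewrite !mulrA (probZ_toggle kRe Zk).
Qed.

Lemma EZ_coord_true :
  EZ Re pz (fun Z => (if Z k then 1 else 0) * h Z) = pz * EZ Re pz h.
Proof.
have -> : EZ Re pz h = EZ Re pz (fun Z => (if Z k then 1 else 0) * h Z)
                      + EZ Re pz (fun Z => (if ~~ Z k then 1 else 0) * h Z).
  by rewrite -EZD; apply: eq_bigr => Z _; case: (Z k); rewrite ?mul1r ?mul0r ?addr0 ?add0r.
rewrite mulrDr -EZ_toggle_balance; ring.
Qed.

Lemma EZ_coord_false :
  EZ Re pz (fun Z => (if ~~ Z k then 1 else 0) * h Z) = (1 - pz) * EZ Re pz h.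
Proof.
have -> : EZ Re pz (fun Z => (if ~~ Z k then 1 else 0) * h Z)
          = EZ Re pz h - EZ Re pz (fun Z => (if Z k then 1 else 0) * h Z).
  by rewrite -EZB; apply: eq_bigr => Z _; case: (Z k); rewrite ?mul1r ?mul0r ?subr0 ?subrr.
rewrite EZ_coord_true; ring.
Qed.

End IndependentCoordinate.
End ExpectationZ.

Section Alter.
Variables (R : realFieldType) (N : nat) (A : rel 'I_N).
Variables (Re Ra : {set 'I_N}) (e : 'I_N -> 'I_N).
Hypotheses (disjoint_RaRe : [disjoint Ra & Re])
           (recruited : forall j, j \in Ra -> e j \in Re /\ A j (e j)).
Variables (i : 'I_N) (pz : R).
Hypothesis iRa : i \in Ra.

Let iNRe : i \notin Re. Proof. by rewrite (disjointFr disjoint_RaRe iRa). Qed.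
Let eiRe : e i \in Re. Proof. by have [] := recruited iRa. Qed.
Let ei_neq_i : e i != i.
Proof. by apply: contraNneq iNRe => <-. Qed.

Lemma Ftilde_alter Z : Ftilde Ra e Z i = Z (e i).
Proof.
rewrite /Ftilde (bigD1 (e i)) //= /Atilde iRa eqxx /= big1 ?addn0.
  by case: (Z (e i)).
move=> j /andP[_ j_neq_ei]; rewrite (negbTE j_neq_ei) /=.
case jRa: (j \in Ra); last by rewrite andbF.
have [ejRe _] := recruited jRa.
by rewrite (_ : i == e j = false) ?andbF //; apply: contraNF iNRe => /eqP->.
Qed.

(* S_i also counts neighbours outside Re; these are untreated only on the
   support of the law. *)
Lemma Sexp_alter Z : probZ Re pz Z != 0 ->
  Sexp A Z i = (Z (e i) + Sminus A Re e Z i)%N.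
Proof.
move=> nz; have [_ Aiei] := recruited iRa.
rewrite /Sexp (bigD1 (e i)) //= Aiei andbT; congr addn.
rewrite /Sminus big_mkcond [RHS]big_mkcond /=; apply: eq_bigr => j _.
rewrite in_setD1; case jRe: (j \in Re).
  by rewrite (_ : j != i) ?andbT //; apply: contraTneq jRe => ->.
by rewrite (probZ_supp nz (negbT jRe)) andbF /=; case: ifP.
Qed.

Lemma Sminus_toggle Z :
  Sminus A Re e (toggle (e i) Z) i = Sminus A Re e Z i.
Proof.
apply: eq_bigr => j; rewrite in_setD1 => /andP[j_neq_ei _].
by rewrite ffunE (negbTE j_neq_ei).
Qed.

Variables (delta : R) (Y00 Y01 Y02 : 'I_N -> R).
Hypothesis Y_shift : Y02 i - Y01 i = delta * (Y01 i - Y00 i).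

Definition Y_treated_ego (s : nat) : R := if s == 0%N then Y01 i else Y02 i.
Definition Y_untreated_ego (s : nat) : R :=
  if s == 0%N then Y00 i else if s == 1%N then Y01 i else Y02 i.

Lemma Yobs_alter Z : probZ Re pz Z != 0 ->
  Yobs A Y00 Y01 Y02 Z i = if Z (e i) then Y_treated_ego (Sminus A Re e Z i)
                           else Y_untreated_ego (Sminus A Re e Z i).
Proof.
move=> nz; rewrite /Yobs Sexp_alter //.
by case: (Z (e i)) => //=; rewrite /Y_treated_ego; case: (Sminus _ _ _ _ _).
Qed.

Lemma Y_ego_contrast s :
  Y_treated_ego s - Y_untreated_ego s
  = (Y01 i - Y00 i) * (if s == 0%N then 1 else 0)
    + delta * (Y01 i - Y00 i) * (if s == 1%N then 1 else 0).
Proof.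
rewrite /Y_treated_ego /Y_untreated_ego.
by case: s => [|[|s]] /=; rewrite ?mulr1 ?mulr0 ?addr0 ?add0r ?subrr ?Y_shift.
Qed.

Hypothesis pz_gt0_lt1 : 0 < pz < 1.

Lemma EZ_HTterm_alter :
  EZ Re pz (fun Z => HTterm A Ra e pz Y00 Y01 Y02 Z i)
  = (pistar0 A Re e pz i + pistar1 A Re e pz i * delta) * (Y01 i - Y00 i).
Proof.
have [pz_gt0 pz_lt1] := andP pz_gt0_lt1.
have pz_neq0 : pz != 0 by rewrite gt_eqF.
have pzC_neq0 : 1 - pz != 0 by rewrite subr_eq0 eq_sym lt_eqF.
pose Sm Z := Sminus A Re e Z i.
have Sm_toggle (g : nat -> R) c Z :
    c * g (Sm (toggle (e i) Z)) = c * g (Sm Z) by rewrite /Sm Sminus_toggle.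
have HT_on_support : EZ Re pz (fun Z => HTterm A Ra e pz Y00 Y01 Y02 Z i)
  = EZ Re pz (fun Z =>
      (if Z (e i) then 1 else 0) * (pz^-1 * Y_treated_ego (Sm Z))
    - (if ~~ Z (e i) then 1 else 0) * ((1 - pz)^-1 * Y_untreated_ego (Sm Z))).
  apply: EZ_eq_on_support => Z nz; rewrite /HTterm Ftilde_alter Yobs_alter //.
  by case: (Z (e i)); rewrite /= ?mul1r ?mul0r ?subr0 ?sub0r mulrC.
rewrite HT_on_support EZB (EZ_coord_true pz eiRe (Sm_toggle _ _)).
rewrite (EZ_coord_false pz eiRe (Sm_toggle _ _)) !EZZ !mulrA !mulfV // !mul1r.
rewrite -EZB (EZ_eq_on_support (fun Z _ => Y_ego_contrast (Sm Z))).
by rewrite EZD !EZZ /pistar0 /pistar1 /PrZ; ring.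
Qed.

End Alter.

Theorem mainTheorem5 (R : realFieldType) (N : nat) (A : rel 'I_N)
  (Re Ra : {set 'I_N}) (e : 'I_N -> 'I_N) (pz delta : R)
  (Y00 Y01 Y02 : 'I_N -> R) :
  symmetric A ->
  irreflexive A ->
  Re != set0 ->
  Ra != set0 ->
  [disjoint Ra & Re] ->
  (forall j, j \in Ra -> e j \in Re /\ A j (e j)) ->
  0 < pz < 1 ->
  (forall i, i \in Ra -> Y02 i - Y01 i = delta * (Y01 i - Y00 i)) ->
  (forall i, i \in Ra -> pistar0 A Re e pz i + pistar1 A Re e pz i * delta != 0) ->
  EZ Re pz (IEhat A Ra e pz Y00 Y01 Y02)
    = (#|Ra|%:R)^-1 * \sum_(i in Ra)
        (pistar0 A Re e pz i + pistar1 A Re e pz i * delta) * (Y01 i - Y00 i)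
  /\ EZ Re pz (IEhat_adj A Re Ra e pz delta Y00 Y01 Y02) = IE Ra Y00 Y01.
Proof.
(* The identities hold alter by alter. *)
move=> _ _ _ _ disj recruited pz01 Y_shift bias_neq0.
have EHT i : i \in Ra -> _ :=
  fun iRa => EZ_HTterm_alter disj recruited iRa (Y_shift i iRa) pz01.
split.
  rewrite /IEhat EZZ EZ_sum; congr (_ * _).
  by apply: eq_bigr => i iRa; rewrite EHT.
rewrite /IEhat_adj EZZ EZ_sum /IE; congr (_ * _); apply: eq_bigr => i iRa.
by rewrite EZZ EHT // mulrA mulVf ?mul1r ?bias_neq0.
Qed.
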